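(* Let $d\geq 1$ and $c\geq 0$ be integers. Let $R_{d,c}$ be the set of all two-dimensional decompositions with parameters $b=2$, $d$, $c$ (of any integer $w\in\{0,\dots,2dc\}$), i.e. the set of all $2\times d$ matrices with entries in $\{0,\dots,c\}$ weakly decreasing along rows and down columns. Let $FBT_{d,c+1}$ be the set of finite full binary trees with exactly $c+1$ left fathers (the root included) and exactly $d$ right fathers. Then there is a bijection between $R_{d,c}$ and $FBT_{d,c+1}$.
   Context: Two-dimensional decomposition: given integers $d\geq1$, $b\geq 1$, $c\geq 0$, $w\geq 0$, a two-dimensional decomposition of $w$ with parameters $d,b,c$ is a $b\times d$ matrix $(a_{i,j})$ with all $a_{i,j}\in\{0,\dots,c\}$, weakly decreasing along each row and down each column, with $\sum a_{i,j}=w$. A full binary tree is a finite rooted planar tree in which every vertex has either no children or exactly two children (a left child and a right child). The root is regarded as a left vertex; left children are left vertices and right children are right vertices. A father is a vertex with two children; left (resp. right) fathers are fathers that are left (resp. right) vertices. *)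

From mathcomp Require Import all_boot all_order all_algebra.
Set Implicit Arguments. Unset Strict Implicit. Unset Printing Implicit Defensive.

Definition two_dim_decomp (d b c w : nat) (A : 'M[nat]_(b, d)) : Prop :=
  (forall i j, A i j <= c) /\
  (forall (i : 'I_b) (j j' : 'I_d), j <= j' -> A i j' <= A i j) /\
  (forall (i i' : 'I_b) (j : 'I_d), i <= i' -> A i' j <= A i j) /\
  (\sum_(i < b) \sum_(j < d) A i j)%N = w.

Definition R_dc (d c : nat) : Type :=
  {A : 'M[nat]_(2, d) | exists w : nat, @two_dim_decomp d 2 c w A}.

Inductive fbtree : Type :=
| Leaf : fbtree
| Node : fbtree -> fbtree -> fbtree.

(* Number of left (resp. right) fathers in a subtree whose root is a left
   vertex iff isl = true. *)
Fixpoint lfathers (t : fbtree) (isl : bool) : nat :=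
  match t with
  | Leaf => 0
  | Node l r => (isl : nat) + lfathers l true + lfathers r false
  end.

Fixpoint rfathers (t : fbtree) (isl : bool) : nat :=
  match t with
  | Leaf => 0
  | Node l r => ((~~ isl) : nat) + rfathers l true + rfathers r false
  end.

(* The root is regarded as a left vertex. *)
Definition left_fathers (t : fbtree) : nat := lfathers t true.
Definition right_fathers (t : fbtree) : nat := rfathers t true.

Definition FBT (d k : nat) : Type :=
  {t : fbtree | left_fathers t = k /\ right_fathers t = d}.

From mathcomp Require Import all_boot all_order all_algebra.
From mathcomp Require Import zify.
From Stdlib Require Import ProofIrrelevance ClassicalEpsilon.
Set Implicit Arguments. Unset Strict Implicit. Unset Printing Implicit Defensive.

(* A full binary tree is determined by its preorder word (true for a father, false for a
   leaf); the preorder words are the words with one more leaf than fathers in which every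
   nonempty suffix has more leaves than fathers.  In such a word the letters true count the
   fathers and the factors [true; false] count the right fathers plus one.  A matrix of
   R_{d,c} is sent to the word [rows_word] of its two rows: the suffix condition holds
   because the bottom row lies below the top one, the word has c + d + 1 letters true and
   d + 1 factors [true; false], and the rows are read back from the lengths of its runs. *)

Lemma injective_surjective_bijective (A B : Type) (f : A -> B) :
  injective f -> (forall y, exists x, f x = y) -> bijective f.
Proof.
move=> f_inj f_surj.
pose g y := proj1_sig (constructive_indefinite_description _ (f_surj y)).
have gK : cancel g f by move=> y; rewrite /g; case: constructive_indefinite_description.
by exists g => // x; apply: f_inj; rewrite gK.
Qed.

Lemma nseq_cat_inj (x : bool) u1 u2 w1 w2 :
  head (~~ x) w1 = ~~ x -> head (~~ x) w2 = ~~ x ->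
  nseq u1 x ++ w1 = nseq u2 x ++ w2 -> u1 = u2 /\ w1 = w2.
Proof.
move=> head1 head2; elim: u1 u2 => [|u1 IHu] [|u2] //=.
- by move=> eq12; rewrite eq12 /= in head1; clear -head1; case: x head1.
- by move=> eq12; rewrite -eq12 /= in head2; clear -head2; case: x head2.
- by case=> /IHu[-> ->].
Qed.

Lemma nseq_run (x : bool) w : exists n w', w = nseq n x ++ w' /\ head (~~ x) w' = ~~ x.
Proof.
elim: w => [|y w [n [w' [-> head_w']]]]; first by exists 0, [::].
case: (eqVneq y x) => [->|neq_yx]; first by exists n.+1, w'.
by exists 0, (y :: nseq n x ++ w'); split=> //=; case: x y neq_yx {head_w'} => [] [].
Qed.

Lemma all2_nth (S T : Type) (r : S -> T -> bool) x0 y0 s t i :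
  all2 r s t -> i < size s -> r (nth x0 s i) (nth y0 t i).
Proof.
elim: s t i => [|x s IHs] [|y t] [|i] //= /andP[rxy rst]; first by [].
by rewrite ltnS; apply: IHs.
Qed.

(** * Preorder words of full binary trees *)

Fixpoint preorder (t : fbtree) : seq bool :=
  if t is Node l r then true :: preorder l ++ preorder r else [:: false].

Definition decode_step (b : bool) (o : option (seq fbtree)) : option (seq fbtree) :=
  if o is Some s then
    if b then (if s is l :: r :: s' then Some (Node l r :: s') else None)
    else Some (Leaf :: s)
  else None.

Definition decode_stack (w : seq bool) : option (seq fbtree) :=
  foldr decode_step (Some [::]) w.

Definition decode (w : seq bool) : fbtree :=
  if decode_stack w is Some [:: t] then t else Leaf.

Fixpoint leaf_dominated (w : seq bool) : bool :=
  if w is _ :: s then (count id w < count negb w) && leaf_dominated s else true.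

Lemma leaf_dominated_catr w1 w2 : leaf_dominated (w1 ++ w2) -> leaf_dominated w2.
Proof. by elim: w1 => //= b w1 IHw1 /andP[_ /IHw1]. Qed.

Lemma decode_preorder t s :
  foldr decode_step (Some s) (preorder t) = Some (t :: s).
Proof. by elim: t s => [|l IHl r IHr] s //=; rewrite foldr_cat IHr IHl. Qed.

Lemma preorderK : cancel preorder decode.
Proof. by move=> t; rewrite /decode /decode_stack decode_preorder. Qed.

Lemma flatten_decode_stack w s :
  decode_stack w = Some s -> flatten (map preorder s) = w.
Proof.
elim: w s => [|b w IHw] s /=; first by case=> <-.
rewrite /decode_stack /= -/(decode_stack w).
case: (decode_stack w) (IHw) => [s'|//] /(_ s' erefl).
case: b => [|<- [<-] //].
by case: s' => [|l [|r s']] //= <- [<-] /=; rewrite catA.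
Qed.

Lemma decode_stack_dominated w s : decode_stack w = Some s ->
  leaf_dominated w /\ count id w + size s = count negb w.
Proof.
elim: w s => [|b w IHw] s /=; first by case=> <-.
rewrite /decode_stack /= -/(decode_stack w).
case: (decode_stack w) (IHw) => [s'|//] /(_ s' erefl) [dom_w count_w].
case: b => /=.
- by case: s' count_w => [|l [|r s']] //= count_w [<-] /=; rewrite dom_w; lia.
- by case=> <- /=; rewrite dom_w; lia.
Qed.

Lemma dominated_decode_stack w : leaf_dominated w ->
  exists2 s, decode_stack w = Some s & count id w + size s = count negb w.
Proof.
elim: w => [|b w IHw] /=; first by exists [::].
case/andP=> lt_w /IHw[s' dec_w count_w].
rewrite /decode_stack /= -/(decode_stack w) dec_w.
case: b lt_w => /= lt_w; last by exists (Leaf :: s') => //=; lia.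
case: s' dec_w count_w => [|l [|r s']] //= dec_w count_w; try lia.
by exists (Node l r :: s') => //=; lia.
Qed.

Lemma preorder_dominated t :
  leaf_dominated (preorder t) /\ count negb (preorder t) = (count id (preorder t)).+1.
Proof.
have [dom_t count_t] := decode_stack_dominated (decode_preorder t [::]).
by split=> //; rewrite -count_t addn1.
Qed.

Lemma decodeK w : leaf_dominated w -> count negb w = (count id w).+1 ->
  preorder (decode w) = w.
Proof.
move=> /dominated_decode_stack[s dec_w count_w] count_leaves.
have : size s = 1 by lia.
rewrite /decode dec_w; case: s dec_w {count_w} => [|t []] // dec_w _.
by have := flatten_decode_stack dec_w; rewrite /= cats0.
Qed.

Fixpoint peaks (w : seq bool) : nat :=
  if w is b :: w' then (b && ~~ head true w') + peaks w' else 0.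

Lemma last_preorder t b : last b (preorder t) = false.
Proof. by elim: t b => [|l IHl r IHr] b //=; rewrite last_cat IHr. Qed.

Lemma peaks_cat w1 w2 : last true w1 = false -> peaks (w1 ++ w2) = peaks w1 + peaks w2.
Proof.
elim: w1 => [|b [|b' w1] IHw1] //=; first by move=> ->.
by move=> /IHw1 /= ->; rewrite addnA.
Qed.

Lemma peaks_le_count w : peaks w <= count id w.
Proof. by elim: w => //= b w IHw; case: b => /=; lia. Qed.

Lemma peaks_gt0 w : leaf_dominated w -> head false w = true -> 0 < peaks w.
Proof.
elim: w => // b w IHw /= /andP[lt_w dom_w] b_true; subst b.
case: w IHw lt_w dom_w => [|[] w] IHw lt_w dom_w //=.
by have /= := IHw dom_w erefl; lia.
Qed.

Lemma peaks_block u v w : peaks (nseq u.+1 true ++ nseq v.+1 false ++ w) = (peaks w).+1.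
Proof.
have peaks_falses n : peaks (nseq n false ++ w) = peaks w by elim: n.
elim: u => [|u IHu] /=; first by rewrite peaks_falses.
by have /= -> := IHu.
Qed.

Lemma count_preorder t isl : count id (preorder t) = lfathers t isl + rfathers t isl.
Proof.
elim: t isl => [|l IHl r IHr] isl //=.
by rewrite count_cat (IHl true) (IHr false); case: isl => /=; lia.
Qed.

(* A factor [true; false] marks a father whose left child is a leaf, i.e. the bottom of a
   maximal chain of left children, and such a chain starts at the root or at a right father. *)
Lemma peaks_preorder t isl :
  peaks (preorder t) = rfathers t isl + (isl && (if t is Node _ _ then true else false)).
Proof.
elim: t isl => [|l IHl r IHr] isl /=; first by rewrite andbF.
rewrite peaks_cat ?last_preorder // (IHl true) (IHr false).
by case: l {IHl} => [|l1 l2]; case: isl => /=; lia.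
Qed.

Lemma fathers_preorder t k d :
  left_fathers t = k.+1 /\ right_fathers t = d <->
  count id (preorder t) = k + d + 1 /\ peaks (preorder t) = d.+1.
Proof.
rewrite /left_fathers /right_fathers (count_preorder t true) (peaks_preorder t true).
by case: t => [|l r] /=; split; case; lia.
Qed.

(** * Words of two decreasing rows *)

Fixpoint decreasing_rows (pt pb : nat) (ts bs : seq nat) : bool :=
  match ts, bs with
  | [::], [::] => true
  | t :: ts', b :: bs' => [&& t <= pt, b <= pb, b <= t & decreasing_rows t b ts' bs']
  | _, _ => false
  end.

Lemma decreasing_rows_cons pt pb t b ts bs :
  decreasing_rows pt pb (t :: ts) (b :: bs) =
  [&& t <= pt, b <= pb, b <= t & decreasing_rows t b ts bs].
Proof. by []. Qed.

Lemma decreasing_rowsE pt pb ts bs :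
  decreasing_rows pt pb ts bs = [&& path geq pt ts, path geq pb bs & all2 leq bs ts].
Proof.
elim: ts pt pb bs => [|t ts IHts] pt pb [|b bs] //=; rewrite ?andbF // IHts.
by case: (t <= pt) (b <= pb) (b <= t) => [] [] [] //=; rewrite !andbF.
Qed.

Lemma size_decreasing_rows pt pb ts bs :
  decreasing_rows pt pb ts bs -> size ts = size bs.
Proof. by elim: ts pt pb bs => [|t ts IHts] pt pb [|b bs] //= /and4P[_ _ _ /IHts ->]. Qed.

(* [ts] and [bs] are the top and bottom rows, [pt] and [pb] the entries of the column
   preceding them. *)
Fixpoint rows_word (pt pb : nat) (ts bs : seq nat) : seq bool :=
  match ts, bs with
  | t :: ts', b :: bs' =>
      nseq (pb - b).+1 true ++ nseq (pt - t).+1 false ++ rows_word t b ts' bs'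
  | _, _ => nseq pb.+1 true ++ nseq pt.+2 false
  end.

(* The trailing [[::]] gives the shape of [peaks_block] and [rows_word_cons]. *)
Lemma rows_word_nil pt pb :
  rows_word pt pb [::] [::] = nseq pb.+1 true ++ nseq pt.+2 false ++ [::].
Proof. by rewrite cats0. Qed.

Lemma rows_word_cons pt pb t b ts bs : rows_word pt pb (t :: ts) (b :: bs) =
  nseq (pb - b).+1 true ++ nseq (pt - t).+1 false ++ rows_word t b ts bs.
Proof. by []. Qed.

Lemma head_rows_word x0 pt pb ts bs : head x0 (rows_word pt pb ts bs) = true.
Proof. by case: ts bs => [|t ts] [|b bs]. Qed.

Lemma peaks_rows_word pt pb ts bs :
  decreasing_rows pt pb ts bs -> peaks (rows_word pt pb ts bs) = (size ts).+1.
Proof.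
elim: ts pt pb bs => [|t ts IHts] pt pb [|b bs] //.
- by rewrite rows_word_nil peaks_block.
- by case/and4P=> _ _ _ dec; rewrite rows_word_cons peaks_block IHts.
Qed.

Lemma count_rows_word pt pb ts bs : decreasing_rows pt pb ts bs ->
  count id (rows_word pt pb ts bs) = pb + size ts + 1 /\
  count negb (rows_word pt pb ts bs) = pt + size ts + 2.
Proof.
elim: ts pt pb bs => [|t ts IHts] pt pb [|b bs] //=.
- by move=> _; rewrite !(count_cat, count_nseq) /= ?(count_cat, count_nseq) /=; lia.
- case/and4P=> tpt bpb _ /IHts[].
  by rewrite !(count_cat, count_nseq) /= ?(count_cat, count_nseq) /=; lia.
Qed.

Lemma dominated_trues n w :
  leaf_dominated w -> n + count id w < count negb w -> leaf_dominated (nseq n true ++ w).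
Proof.
elim: n => [|n IHn] //= dom_w lt_w.
by rewrite IHn ?count_cat ?count_nseq /=; lia.
Qed.

Lemma dominated_falses n w :
  leaf_dominated w -> count id w <= count negb w -> leaf_dominated (nseq n false ++ w).
Proof.
elim: n => [|n IHn] //= dom_w le_w.
by rewrite IHn ?count_cat ?count_nseq /=; lia.
Qed.

Lemma rows_word_dominated pt pb ts bs : decreasing_rows pt pb ts bs -> pb <= pt ->
  leaf_dominated (rows_word pt pb ts bs).
Proof.
elim: ts pt pb bs => [|t ts IHts] pt pb [|b bs] // dec pbpt.
- rewrite rows_word_nil; apply: dominated_trues; first exact: dominated_falses.
  by rewrite !(count_cat, count_nseq) /= ?(count_cat, count_nseq) /=; lia.
- have /and4P[tpt bpb bt dec'] := dec; rewrite rows_word_cons.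
  have [count_t count_f] := count_rows_word dec'.
  apply: dominated_trues; first by apply: dominated_falses (IHts _ _ _ dec' bt) _; lia.
  by rewrite !(count_cat, count_nseq) /= ?(count_cat, count_nseq) /=; lia.
Qed.

Lemma rows_word_inj pt pb ts1 bs1 ts2 bs2 :
  decreasing_rows pt pb ts1 bs1 -> decreasing_rows pt pb ts2 bs2 ->
  rows_word pt pb ts1 bs1 = rows_word pt pb ts2 bs2 -> ts1 = ts2 /\ bs1 = bs2.
Proof.
move=> dec1 dec2 eq12.
have eq_size : size ts1 = size ts2.
  have := congr1 (count id) eq12.
  by rewrite (proj1 (count_rows_word dec1)) (proj1 (count_rows_word dec2)); lia.
elim: ts1 pt pb bs1 ts2 bs2 dec1 dec2 eq12 eq_size
  => [|t1 ts1 IHts] pt pb [|b1 bs1] [|t2 ts2] [|b2 bs2] //.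
rewrite !decreasing_rows_cons !rows_word_cons.
move=> /and4P[t1pt b1pb _ dec1] /and4P[t2pt b2pb _ dec2].
case/nseq_cat_inj => // - [eq_b]; case/nseq_cat_inj; rewrite ?head_rows_word // => - [eq_t].
have eq_b' : b2 = b1 by lia.
have eq_t' : t2 = t1 by lia.
subst b2 t2 => eq_rest [eq_size].
by have [-> ->] := IHts _ _ _ _ _ dec1 dec2 eq_rest eq_size.
Qed.

Lemma first_block w : leaf_dominated w -> head false w = true ->
  exists u v r, w = nseq u.+1 true ++ nseq v.+1 false ++ r /\ head true r = true.
Proof.
have [[|u] [s [-> head_s]]] := nseq_run true w; first by rewrite head_s.
move: head_s; have [[|v] [r [-> head_r]]] := nseq_run false s; last by exists u, v, r.
case: r head_r => [_ _|b r /= -> //].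
by rewrite /= !cats0 !count_nseq.
Qed.

Lemma rows_word_surj m pt pb w : leaf_dominated w -> head false w = true ->
  count id w = pb + m + 1 -> count negb w = pt + m + 2 -> peaks w = m.+1 ->
  exists ts bs, [/\ decreasing_rows pt pb ts bs, size ts = m & rows_word pt pb ts bs = w].
Proof.
elim: m pt pb w => [|m IHm] pt pb w dom_w head_w count_t count_f.
all: have [u [v [r [def_w head_r]]]] := first_block dom_w head_w; subst w.
all: rewrite peaks_block => - [peaks_r]; rewrite !(count_cat, count_nseq) /= in count_t count_f.
all: have {dom_w head_w} := leaf_dominated_catr (leaf_dominated_catr dom_w).
all: case: r head_r count_t count_f peaks_r => [|y r] head_r count_t count_f peaks_r dom_r //.
- rewrite /= in count_t count_f; have -> : u = pb by lia.
  have -> : v = pt.+1 by lia.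
  by exists [::], [::]; rewrite rows_word_nil.
- by have := peaks_gt0 dom_r head_r; rewrite peaks_r.
- have := peaks_le_count (y :: r); have /andP[lt_r _] := dom_r; rewrite peaks_r => le_r.
  have [ts [bs [dec_r size_ts <-]]] :=
    IHm (pt - v) (pb - u) (y :: r) dom_r head_r ltac:(lia) ltac:(lia) peaks_r.
  exists (pt - v :: ts), (pb - u :: bs); split.
  + by rewrite decreasing_rows_cons dec_r andbT; apply/and3P; split; lia.
  + by rewrite /= size_ts.
  + rewrite rows_word_cons; have -> : pb - (pb - u) = u by lia.
    by have -> : pt - (pt - v) = v by lia.
Qed.

(** * Two-row matrices and trees *)

Section TwoRowMatrices.
Variable d : nat.

Definition row_seq (M : 'M[nat]_(2, d)) (i : 'I_2) : seq nat := [seq M i j | j <- enum 'I_d].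

Definition rows_mx (ts bs : seq nat) : 'M[nat]_(2, d) :=
  \matrix_(i, j) nth 0 (if i == ord0 then ts else bs) j.

Lemma size_row_seq M i : size (row_seq M i) = d.
Proof. by rewrite size_map size_enum_ord. Qed.

Lemma nth_row_seq M i (j : 'I_d) : nth 0 (row_seq M i) j = M i j.
Proof. by rewrite (nth_map j) ?size_enum_ord // nth_ord_enum. Qed.

Lemma row_seq_rows_mx ts bs : size ts = d -> size bs = d ->
  row_seq (rows_mx ts bs) ord0 = ts /\ row_seq (rows_mx ts bs) ord_max = bs.
Proof.
move=> size_ts size_bs; split; apply: (@eq_from_nth _ 0); rewrite ?size_row_seq //.
all: by move=> j lt_jd; rewrite (nth_row_seq _ _ (Ordinal lt_jd)) mxE.
Qed.

Lemma rows_mxK M : rows_mx (row_seq M ord0) (row_seq M ord_max) = M.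
Proof.
apply/matrixP=> i j; rewrite mxE (fun_if (fun s => nth 0 s j)) !nth_row_seq.
by case: i => [[|[|]] lt_i2] //=; congr (M _ j); apply: val_inj.
Qed.

Lemma decreasing_rows_mx c w M :
  two_dim_decomp c w M -> decreasing_rows c c (row_seq M ord0) (row_seq M ord_max).
Proof.
case=> le_c [decr_row [decr_col _]].
have sorted_enum : sorted (relpre val ltn) (enum 'I_d).
  by rewrite -sorted_map val_enum_ord iota_ltn_sorted.
have path_row i : path geq c (row_seq M i).
  rewrite path_sortedE; last exact: rev_trans leq_trans.
  rewrite all_map sorted_map; apply/andP; split; first by apply/allP=> j _; apply: le_c.
  by apply: sub_sorted sorted_enum => j j' /ltnW; apply: decr_row.
rewrite decreasing_rowsE !path_row all2E !size_map eqxx zip_map all_map.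
by apply/allP=> j _; apply: decr_col.
Qed.

Lemma rows_mx_decomp c ts bs : decreasing_rows c c ts bs -> size ts = d ->
  two_dim_decomp c (\sum_(i < 2) \sum_(j < d) rows_mx ts bs i j) (rows_mx ts bs).
Proof.
move=> dec size_ts; have size_bs := size_decreasing_rows dec.
move: dec; rewrite decreasing_rowsE !path_sortedE; try exact: rev_trans leq_trans.
case/and3P=> /andP[/all_nthP le_ts sorted_ts] /andP[_ sorted_bs] le_bs_ts.
have decr s : sorted geq s -> size s = d ->
    forall j j' : 'I_d, j <= j' -> nth 0 s j' <= nth 0 s j.
  move=> sorted_s size_s j j' le_jj'.
  have geq_refl : reflexive geq by move=> ?; apply: leqnn.
  by apply: (sorted_leq_nth (rev_trans leq_trans) geq_refl 0 sorted_s); rewrite ?inE ?size_s.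
have le_bts (j : 'I_d) : nth 0 bs j <= nth 0 ts j.
  by apply: all2_nth le_bs_ts _; rewrite -size_bs size_ts.
split; [|split; [|split]] => //.
- move=> i j; rewrite mxE; have le_tc : nth 0 ts j <= c by apply: le_ts; rewrite size_ts.
  by case: ifP => _ //; apply: leq_trans le_tc.
- by move=> i j j' le_jj'; rewrite !mxE; case: ifP => _; apply: decr; rewrite -?size_bs.
- by move=> i i' j; rewrite !mxE; case: i i' => [[|[|i]] lt_i] [[|[|i']] lt_i'] //=.
Qed.

End TwoRowMatrices.

Definition mx_tree d c (M : 'M[nat]_(2, d)) : fbtree :=
  decode (rows_word c c (row_seq M ord0) (row_seq M ord_max)).

Section MatrixTree.
Variables d c : nat.

Lemma preorder_mx_tree w (M : 'M[nat]_(2, d)) : two_dim_decomp c w M ->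
  preorder (mx_tree c M) = rows_word c c (row_seq M ord0) (row_seq M ord_max).
Proof.
move=> /decreasing_rows_mx dec; have [count_t count_f] := count_rows_word dec.
by apply: decodeK; [exact: rows_word_dominated | lia].
Qed.

Lemma mx_tree_fathers (A : R_dc d c) :
  left_fathers (mx_tree c (sval A)) = c.+1 /\ right_fathers (mx_tree c (sval A)) = d.
Proof.
case: A => M [w decM] /=; have dec := decreasing_rows_mx decM.
apply/fathers_preorder; rewrite (preorder_mx_tree decM) peaks_rows_word //.
by rewrite (proj1 (count_rows_word dec)) size_row_seq.
Qed.

Lemma mx_tree_inj w1 w2 (M1 M2 : 'M[nat]_(2, d)) :
  two_dim_decomp c w1 M1 -> two_dim_decomp c w2 M2 -> mx_tree c M1 = mx_tree c M2 -> M1 = M2.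
Proof.
move=> decM1 decM2 /(congr1 preorder).
rewrite (preorder_mx_tree decM1) (preorder_mx_tree decM2).
case/(rows_word_inj (decreasing_rows_mx decM1) (decreasing_rows_mx decM2)) => eq_t eq_b.
by rewrite -(rows_mxK M1) -(rows_mxK M2) eq_t eq_b.
Qed.

Lemma mx_tree_surj t : left_fathers t = c.+1 -> right_fathers t = d ->
  exists2 M : 'M[nat]_(2, d), (exists w, two_dim_decomp c w M) & mx_tree c M = t.
Proof.
move=> left_t right_t.
have [count_t peaks_t] := iffLR (fathers_preorder t c d) (conj left_t right_t).
have [dom_t count_f] := preorder_dominated t.
have head_t : head false (preorder t) = true.
  by case: t {right_t count_t peaks_t dom_t count_f} left_t.
have [ts [bs [dec size_ts word_t]]] :=
  rows_word_surj (pt := c) dom_t head_t count_t ltac:(lia) peaks_t.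
have size_bs : size bs = d by rewrite -(size_decreasing_rows dec).
have [rows_t rows_b] := row_seq_rows_mx size_ts size_bs.
exists (rows_mx d ts bs); first by eexists; exact: rows_mx_decomp.
by rewrite /mx_tree rows_t rows_b word_t preorderK.
Qed.

End MatrixTree.

Theorem theorem2p1 (d c : nat) (hd : 1 <= d) :
  exists f : R_dc d c -> FBT d c.+1, bijective f.
Proof.
have sig_inj T (P : T -> Prop) : forall x y : {t | P t}, sval x = sval y -> x = y.
  by apply: eq_sig_hprop => *; apply: proof_irrelevance.
exists (fun A => exist _ (mx_tree c (sval A)) (mx_tree_fathers A)).
apply: injective_surjective_bijective.
- move=> [M1 [w1 decM1]] [M2 [w2 decM2]] /(congr1 sval) /= /(mx_tree_inj decM1 decM2) eqM.
  exact: sig_inj.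
- move=> [t [left_t right_t]]; have [M decM treeM] := mx_tree_surj left_t right_t.
  by exists (exist _ M decM); apply: sig_inj.
Qed.
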